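(* Let $w$ be a metric on a finite set $V$, let $T$ be a minimum spanning tree of $G_w$, and let $\mathcal{T}$ be a collection of pairwise edge-disjoint subtrees of $T$. Then $$\mathsf{TSP}(w)\le 2\cdot \mathsf{MST}(w)-\frac12\sum_{T'\in\mathcal{T}}\mathsf{adv}(T').$$
   Context: $V$ is a finite set with $|V|=n\ge 3$ and $w$ a metric on $V$. $G_w$ is the complete graph on $V$ where the edge (pair) $(u,v)$ has weight $w(u,v)$; for a set (or multiset) $E'$ of pairs, $w(E')=\sum_{e\in E'}w(e)$, and for a subgraph $H$, $w(H)=w(E(H))$. $\mathsf{MST}(w)$ is the weight of a minimum spanning tree of $G_w$ and $\mathsf{TSP}(w)$ is the minimum weight of a Hamiltonian cycle of $G_w$. Fix a minimum spanning tree $T$ of $G_w$. For a pair $e=(u,v)$ of distinct vertices, $P^T_e$ denotes the unique $u$–$v$ path in $T$. An edge $f\in E(T)$ is covered by a pair $e$ iff $f\in E(P^T_e)$ (in particular an edge of $T$ covers exactly itself); $\mathsf{cov}(e)$ is the set of edges of $T$ covered by $e$, and $\mathsf{cov}(E')=\bigcup_{e\in E'}\mathsf{cov}(e)$. For a subtree $T'$ of $T$, $\mathsf{cov}(E',T')=\mathsf{cov}(E')\cap E(T')$, and the cover advantage of $E'$ on $T'$ is $\mathsf{adv}(E',T')=w(\mathsf{cov}(E',T'))-w(E')$. The optimal cover advantage $\mathsf{adv}(T')$ is the maximum of $\mathsf{adv}(E',T')$ over all sets $E'$ of pairs each having at least one endpoint in $V(T')$. *)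

From HB Require Import structures.
From mathcomp Require Import all_boot all_order all_algebra all_fingroup.
From mathcomp Require Import boolp.
Set Implicit Arguments. Unset Strict Implicit. Unset Printing Implicit Defensive.
Import Order.TTheory GRing.Theory Num.Theory.
Local Open Scope ring_scope.

Section Defs.
Variables (R : realFieldType) (V : finType).

Definition metric (w : V -> V -> R) : Prop :=
  [/\ forall x, w x x = 0,
      forall x y, x != y -> 0 < w x y,
      forall x y, w x y = w y x &
      forall x y z, w x z <= w x y + w y z].

(* pairs (edges of the complete graph G_w) are 2-element subsets of V *)
Definition pairs : {set {set V}} := [set e : {set V} | #|e| == 2%N].

Definition wE (w : V -> V -> R) (e : {set V}) : R :=
  if [pick x in e] is Some x then
    (if [pick y in e :\ x] is Some y then w x y else 0) else 0.

Definition wset (w : V -> V -> R) (E : {set {set V}}) : R := \sum_(e in E) wE w e.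

Definition tadj (F : {set {set V}}) : rel V := fun x y => [set x; y] \in F.

Definition spanning (F : {set {set V}}) : bool :=
  [&& F \subset pairs, #|F| == (#|V| - 1)%N &
      [forall x, forall y, connect (tadj F) x y]].

(* minimum of a finite sequence of reals (0 on the empty sequence) *)
Definition minseq (s : seq R) : R := foldr Num.min (head 0 s) s.

Definition MST (w : V -> V -> R) : R :=
  minseq [seq wset w F | F <- enum [pred F | spanning F]].

Definition is_MST (w : V -> V -> R) (T : {set {set V}}) : Prop :=
  spanning T /\ (forall F, spanning F -> wset w T <= wset w F).

(* Hamiltonian cycles are given by cyclic permutations s of V (a single cycle
   through all vertices); their edge set is {{x, s x} | x in V}. *)
Definition hamiltonian (s : {perm V}) : bool :=
  [forall x, forall y, fconnect s x y].

Definition ham_edges (s : {perm V}) : {set {set V}} := [set [set x; s x] | x : V].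

Definition TSP (w : V -> V -> R) : R :=
  minseq [seq wset w (ham_edges s) | s <- enum [pred s : {perm V} | hamiltonian s]].

(* simple paths u = x0, x1, ..., xk = v in the graph with edge set T, given as
   u :: p, and their edge sets *)
Definition tpath (T : {set {set V}}) (u v : V) (p : seq V) : Prop :=
  [/\ path (tadj T) u p, last u p = v & uniq (u :: p)].

Definition pedges (u : V) (p : seq V) : {set {set V}} :=
  [set e in [seq [set xy.1; xy.2] | xy <- zip (u :: p) p]].

(* cov(e): edges of T on the (unique) T-path P^T_e between the ends of e *)
Definition cov (T : {set {set V}}) (e : {set V}) : {set {set V}} :=
  [set f in T | `[< exists u v p, [/\ e = [set u; v], tpath T u v p & f \in pedges u p] >]].

Definition covS (T E : {set {set V}}) : {set {set V}} := \bigcup_(e in E) cov T e.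

Definition Vt (T' : {set {set V}}) : {set V} := [set x | [exists e in T', x \in e]].

Definition subtree (T T' : {set {set V}}) : Prop :=
  T' \subset T /\ (forall x y, x \in Vt T' -> y \in Vt T' -> connect (tadj T') x y).

Definition adv_set (w : V -> V -> R) (T E T' : {set {set V}}) : R :=
  wset w (covS T E :&: T') - wset w E.

(* adv(T'): maximum over sets E' of pairs each with an endpoint in V(T');
   E' = set0 is admissible with value 0, so the max with neutral 0 is exact *)
Definition adv (w : V -> V -> R) (T T' : {set {set V}}) : R :=
  \big[Num.max/0]_(E : {set {set V}} |
      (E \subset pairs) && [forall e in E, [exists x in Vt T', x \in e]])
    adv_set w T E T'.

End Defs.

From HB Require Import structures.
From mathcomp Require Import all_boot all_order all_algebra all_fingroup.
From mathcomp Require Import boolp.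
From mathcomp Require Import ring lra zify.
Set Implicit Arguments. Unset Strict Implicit. Unset Printing Implicit Defensive.
Import Order.TTheory GRing.Theory Num.Theory.
Local Open Scope ring_scope.

(* Let U be the union of optimal sets E_T' (T' in the family). As the subtrees are
   edge-disjoint, sum adv(T') <= w(cov U) - w(U). For S a subset of U let X_S be the
   set of tree edges lying on an odd number of the tree paths P_e, e in S. Then X_S
   is a T-join for the odd-degree vertices of S, so S, X_S and two copies of T \ X_S
   form a connected multigraph with all degrees even; shortcutting an Euler tour of it
   gives TSP <= 2 w(T) - w(X_S) + w(S). Every e in U lies in S, and every edge of
   cov(U) lies in X_S, for exactly half of the subsets S of U; averaging over S yields
   one with w(X_S) - w(S) >= (w(cov U) - w(U)) / 2. *)

Section Minseq.
Variable R : realFieldType.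

Lemma minseq_le (s : seq R) x : x \in s -> minseq s <= x.
Proof.
rewrite /minseq; elim: s {1}(head 0 s) => // y s IH a.
by rewrite inE /= ge_min => /orP[/eqP->|/IH->]; rewrite ?lexx ?orbT.
Qed.

Lemma minseq_ge (s : seq R) b : s != [::] -> (forall x, x \in s -> b <= x) -> b <= minseq s.
Proof.
rewrite /minseq; case: s => // y s _ hb /=; rewrite le_min hb ?mem_head //.
elim: s hb => /= [|z s IH] hb; first by apply: hb; rewrite mem_head.
rewrite le_min hb ?inE ?eqxx ?orbT // IH // => x; rewrite inE => /orP[/eqP->|xs].
  exact/hb/mem_head.
by apply: hb; rewrite !inE xs !orbT.
Qed.

End Minseq.

Section Tours.
Variables (R : realFieldType) (V : finType) (w : V -> V -> R).
Hypothesis hw : metric w.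

Lemma metric0 x : w x x = 0. Proof. by case: hw. Qed.
Lemma metricC x y : w x y = w y x. Proof. by case: hw. Qed.
Lemma metric_triangle x y z : w x z <= w x y + w y z. Proof. by case: hw. Qed.

Lemma metric_ge0 x y : 0 <= w x y.
Proof. case: hw => h0 hp _ _; case: (eqVneq x y) => [->|/hp/ltW //]; by rewrite h0. Qed.

Lemma wE_set2 x y : wE w [set x; y] = w x y.
Proof.
rewrite /wE; case: pickP => [a ha|/(_ x)]; last by rewrite !inE eqxx.
case: pickP => [b hb|h1].
  move: ha hb; rewrite !inE => /orP[]/eqP-> /andP[nb /orP[]/eqP Hb];
    subst b; rewrite ?eqxx // in nb *; exact: metricC.
move: ha; rewrite !inE => /orP[]/eqP Ha; subst a.
  have := h1 y; rewrite !inE eqxx orbT andbT => /negbFE/eqP->; by rewrite metric0.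
have := h1 x; rewrite !inE eqxx andbT => /negbFE/eqP->; by rewrite metric0.
Qed.

Lemma wE_ge0 e : 0 <= wE w e.
Proof. rewrite /wE; case: pickP => // a _; case: pickP => // b _; exact: metric_ge0. Qed.

Lemma wset_subset (A B : {set {set V}}) : A \subset B -> wset w A <= wset w B.
Proof.
move=> AB; rewrite /wset [X in _ <= X](big_setID A) /= (setIidPr AB) lerDl.
by apply: sumr_ge0 => e _; apply: wE_ge0.
Qed.

Fixpoint walk_weight (x : V) (l : seq V) : R :=
  if l is y :: l' then w x y + walk_weight y l' else 0.

(* [x :: l] encodes the closed walk x, l, x: the return to x is implicit. *)
Definition tour_weight (s : seq V) : R :=
  if s is x :: l then walk_weight x (rcons l x) else 0.

Lemma walk_weight_ge0 x l : 0 <= walk_weight x l.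
Proof. by elim: l x => //= y l IH x; rewrite addr_ge0 ?metric_ge0. Qed.

Lemma tour_weight_ge0 s : 0 <= tour_weight s.
Proof. case: s => //= x l; exact: walk_weight_ge0. Qed.

Lemma walk_weight_cat x s t :
  walk_weight x (s ++ t) = walk_weight x s + walk_weight (last x s) t.
Proof. by elim: s x => [|y s IH] x /=; rewrite ?add0r // IH addrA. Qed.

Lemma walk_weight_rcons x s y :
  walk_weight x (rcons s y) = walk_weight x s + w (last x s) y.
Proof. by rewrite -cats1 walk_weight_cat /= addr0. Qed.

Lemma tour_weight_rot s1 v s2 : tour_weight (s1 ++ v :: s2) = tour_weight (v :: s2 ++ s1).
Proof.
case: s1 => [|x s1] /=; first by rewrite cats0.
by rewrite rcons_cat /= rcons_cat !walk_weight_cat /= !walk_weight_rcons /=; ring.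
Qed.

Lemma tour_weight_rotate_to s v : v \in s ->
  exists a, tour_weight (v :: a) = tour_weight s /\ (v :: a) =i s.
Proof.
move=> /splitPr [s1 s2]; exists (s2 ++ s1); split; first by rewrite tour_weight_rot.
by move=> z; rewrite !(inE, mem_cat) /=; case: (z == v); rewrite ?orbT //= orbC.
Qed.

Lemma tour_weight_splice v a b :
  tour_weight (v :: a ++ v :: b) = tour_weight (v :: a) + tour_weight (v :: b).
Proof. by rewrite /= rcons_cat walk_weight_cat /= !walk_weight_rcons addrA. Qed.

(* Shortcutting: by the triangle inequality, skipping vertices never costs. *)
Lemma walk_weight_subseq x y s l :
  subseq s l -> walk_weight x (rcons s y) <= walk_weight x (rcons l y).
Proof.
elim: l x s => [|z l IH] x [|a s] //=.
- move=> _; have /= := IH z [::] (sub0seq _); rewrite !addr0 => h.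
  by apply: le_trans (metric_triangle x z y) _; rewrite lerD2l.
- case: eqP => [->|_] sub; first by rewrite lerD2l; apply: IH.
  apply: le_trans (_ : _ <= w x z + (w z a + walk_weight a (rcons s y))) _.
    by rewrite addrA lerD2r metric_triangle.
  by rewrite lerD2l; apply: (IH z (a :: s)).
Qed.

Lemma sum_next_at (y0 y : V) p : uniq (y :: p) ->
  \sum_(z <- y :: p) w z (next_at z y0 y p) = walk_weight y (rcons p y0).
Proof.
elim: p y => [|y' p IH] y /=; first by rewrite big_cons big_nil eqxx.
move=> /andP[ny up]; rewrite big_cons eqxx -IH //; congr (_ + _).
by apply: eq_big_seq => z hz; case: eqP => // ezy; rewrite -ezy hz in ny.
Qed.

Lemma sum_imset_le (h : V -> {set V}) (F : {set V} -> R) :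
  (forall e, 0 <= F e) -> \sum_(e in [set h x | x : V]) F e <= \sum_x F (h x).
Proof.
move=> F0; rewrite (partition_big_imset h) /=.
apply: ler_sum => e /imsetP [x _ ->].
by rewrite (bigD1 x) //= lerDl; apply: sumr_ge0.
Qed.

Lemma TSP_le_tour x l : (forall v, v \in x :: l) -> TSP w <= tour_weight (x :: l).
Proof.
(* Shortcut to the duplicate-free cycle c, realised by the permutation next c. *)
move=> hall.
set c := x :: undup (filter (predC1 x) l).
have Uc : uniq c by rewrite /= mem_undup mem_filter /= eqxx undup_uniq.
have Ac v : v \in c.
  rewrite inE mem_undup mem_filter /=; case: eqP => //= nv.
  by have := hall v; rewrite inE; case: eqP.
have Hc : tour_weight c <= tour_weight (x :: l).
  apply: walk_weight_subseq; exact: subseq_trans (undup_subseq _) (filter_subseq _ _).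
set s := perm (can_inj (prev_next Uc)).
have sE : s =1 next c by move=> z; rewrite /s permE.
have hs : hamiltonian s.
  apply/forallP=> a; apply/forallP=> b.
  by rewrite (eq_fconnect sE) (fconnect_cycle (cycle_next Uc) (Ac a)) Ac.
apply: le_trans (_ : TSP w <= wset w (ham_edges s)) _.
  by apply: minseq_le; apply: map_f; rewrite mem_enum.
apply: le_trans Hc; apply: le_trans (sum_imset_le _ wE_ge0) _.
rewrite (eq_bigr (fun z => w z (next c z))); last by move=> z _; rewrite wE_set2 sE.
rewrite (eq_bigl (fun z => z \in c)); last by move=> z; rewrite Ac.
by rewrite -big_uniq //= sum_next_at.
Qed.

(* Repeatedly splice into W0 a tour of L that meets it. *)
Lemma merge_tours (L : seq (seq V)) (W0 : seq V) : W0 != [::] ->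
  exists W, [/\ W != [::], tour_weight W <= tour_weight W0 + \sum_(U <- L) tour_weight U,
    {subset W0 <= W} & forall U, U \in L -> has (mem W) U -> {subset U <= W}].
Proof.
have [n] := ubnP (size L); elim: n L W0 => // n IH L W0 /ltnSE szL nW0.
case hL: (has (fun U => has (mem W0) U) L); last first.
  exists W0; split => //.
    by rewrite lerDl; apply: sumr_ge0 => U _; apply: tour_weight_ge0.
  by move=> U UL hU; move/hasP: hL; case; exists U.
move/hasP: hL => [U UL /hasP [v vU vW0]].
case/splitPr: UL szL => L1 L2 szL.
have [a0 [ha0 ma0]] := tour_weight_rotate_to vW0.
have [b0 [hb0 mb0]] := tour_weight_rotate_to vU.
set W1 := v :: a0 ++ v :: b0.
have sz' : (size (L1 ++ L2) < n)%N by move: szL; rewrite !size_cat /=; lia.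
have [W [nW hW sW cW]] := IH (L1 ++ L2) W1 sz' isT.
have s0 : {subset W0 <= W1}.
  by move=> z; rewrite -ma0 /W1 !inE mem_cat => /orP[]->; rewrite ?orbT.
have s1 : {subset U <= W1}.
  by move=> z; rewrite -mb0 /W1 !inE mem_cat inE => /orP[]->; rewrite ?orbT.
exists W; split => //.
- apply: le_trans hW _; rewrite tour_weight_splice ha0 hb0 !big_cat big_cons /=; lra.
- by move=> z /s0 /sW.
- move=> U'; rewrite mem_cat inE => /orP[h|/orP[/eqP->|h]].
  + by apply: cW; rewrite mem_cat h.
  + by move=> _ z /s1 /sW.
  + by apply: cW; rewrite mem_cat h orbT.
Qed.

End Tours.

Section EvenMultigraphs.
Variables (R : realFieldType) (V : finType) (w : V -> V -> R).
Hypothesis hw : metric w.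

Definition deg (M : seq {set V}) x := count (fun f : {set V} => x \in f) M.

Lemma odd_deg_cons f M x : odd (deg (f :: M) x) = (x \in f) (+) odd (deg M x).
Proof. by rewrite /deg /= oddD; case: (x \in f). Qed.

Lemma pair_other (f : {set V}) b : f \in pairs V -> b \in f ->
  exists2 c, c != b & f = [set b; c].
Proof.
rewrite inE => /cards2P [x [y [nxy ->]]]; rewrite !inE => /orP[]/eqP->.
  by exists y; rewrite // eq_sym.
by exists x; rewrite // setUC.
Qed.

(* Walking from b along unused pairs can only get stuck at the other odd vertex a. *)
Lemma split_off_trail (M : seq {set V}) a b : a != b -> all (mem (pairs V)) M ->
  (forall x, odd (deg M x) = (x == a) || (x == b)) ->
  exists q M', [/\ walk_weight w b (rcons q a) + \sum_(f <- M') wE w f = \sum_(f <- M) wE w f,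
    (size M' < size M)%N, all (mem (pairs V)) M', (forall x, ~~ odd (deg M' x)) &
    forall f, f \in M -> f \in M' \/ {subset f <= b :: rcons q a}].
Proof.
have [n] := ubnP (size M); elim: n M a b => // n IH M a b /ltnSE szM nab allM dM.
have /odd_gt0 : odd (deg M b) by rewrite dM eqxx orbT.
rewrite /deg -has_count => /hasP [f fM bf].
have [c ncb ef] := pair_other (allP allM f fM) bf.
set M0 := rem f M.
have pM : perm_eq M (f :: M0) := perm_to_rem fM.
have dM0 x : odd (deg M0 x) = (x \in f) (+) odd (deg M x).
  by rewrite /deg (seq.permP pM) -/(deg _ x) odd_deg_cons addKb.
have sum0 : \sum_(f <- M) wE w f = wE w f + \sum_(f <- M0) wE w f.
  by rewrite (perm_big _ pM) big_cons.
have allM0 : all (mem (pairs V)) M0.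
  by apply/allP => g /mem_rem gM; apply: (allP allM).
have szM0 : (size M0 < size M)%N by rewrite size_rem // ltn_predL; case: (M) fM.
have memM g : g \in M -> g = f \/ g \in M0.
  by rewrite (perm_mem pM) inE => /orP[/eqP->|->]; [left|right].
case: (eqVneq c a) => [ca|nca].
  subst c; exists [::], M0; split => //.
  - by rewrite sum0 ef (wE_set2 hw) /= addr0.
  - by move=> x; rewrite dM0 dM ef !inE; case: (x == a); case: (x == b).
  - move=> g /memM [->|]; last by left.
    by right; move=> z; rewrite ef !inE.
have dM0' x : odd (deg M0 x) = (x == a) || (x == c).
  rewrite dM0 dM ef !inE; case: (eqVneq x b) => [->|xb].
    by rewrite (eq_sym b a) (negbTE nab) (eq_sym b c) (negbTE ncb) ?orbT.
  by case: (eqVneq x c) => [->|xc] /=; [rewrite (negbTE nca) orbT | case: (x == a)].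
have nac : a != c by rewrite eq_sym.
have [q0 [M' [hw' hsz hall hev hcov]]] := IH M0 a c (leq_trans szM0 szM) nac allM0 dM0'.
exists (c :: q0), M'; split => //.
- by rewrite sum0 ef (wE_set2 hw) /= -hw' addrA.
- exact: ltn_trans hsz szM0.
- move=> g /memM [->|/hcov [->|hs]]; [right|by left|right].
    by move=> z; rewrite ef !inE => /orP[]->; rewrite ?orbT.
  by move=> z /hs hz; rewrite inE hz orbT.
Qed.

Lemma even_pairs_tours (M : seq {set V}) : all (mem (pairs V)) M ->
  (forall x, ~~ odd (deg M x)) ->
  exists L : seq (seq V), \sum_(W <- L) tour_weight w W = \sum_(f <- M) wE w f /\
      forall f, f \in M -> exists2 W, W \in L & {subset f <= W}.
Proof.
have [n] := ubnP (size M); elim: n M => // n IH [|f M0] /ltnSE szM allM dM.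
  by exists [::]; split => //; rewrite !big_nil.
move: allM => /= /andP [fP allM0].
have := fP; rewrite inE => /cards2P [a [b [nab ef]]].
have dM0 x : odd (deg M0 x) = (x == a) || (x == b).
  by have := dM x; rewrite odd_deg_cons ef !inE; case: (odd _); case: (_ || _).
have [q [M' [hw' hsz hall hev hcov]]] := split_off_trail nab allM0 dM0.
have [L [hL cL]] := IH M' (leq_trans hsz (ltnW szM)) hall hev.
exists ((a :: b :: q) :: L); split.
  by rewrite !big_cons -hw' -hL ef (wE_set2 hw) /= addrA.
move=> g; rewrite inE => /orP[/eqP->|/hcov [/cL [W WL sW]|hs]].
- exists (a :: b :: q); first by rewrite inE eqxx.
  by move=> z; rewrite ef !inE => /orP[]->; rewrite ?orbT.
- by exists W => //; rewrite inE WL orbT.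
- exists (a :: b :: q); first by rewrite inE eqxx.
  move=> z /hs; rewrite inE mem_rcons !inE.
  by case/orP => [->|/orP[]->]; rewrite ?orbT.
Qed.

Lemma doubled_pairs_tours (s : seq {set V}) : all (mem (pairs V)) s ->
  exists L : seq (seq V), \sum_(W <- L) tour_weight w W = 2 * \sum_(f <- s) wE w f /\
    forall f, f \in s -> exists2 W, W \in L & {subset f <= W}.
Proof.
elim: s => [|f s IH] /=; first by exists [::]; rewrite !big_nil mulr0.
case/andP; rewrite inE => /cards2P [a [b [nab ef]]] /IH [L [hL cL]].
exists ([:: a; b] :: L); split.
  by rewrite !big_cons hL ef (wE_set2 hw) /= (metricC hw b a); ring.
move=> g; rewrite inE => /orP [/eqP->|/cL [W WL sW]].
  by exists [:: a; b]; rewrite ?inE ?eqxx // ef => z; rewrite !inE.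
by exists W; rewrite // inE WL orbT.
Qed.

End EvenMultigraphs.

Section TreePaths.
Variable V : finType.
Implicit Types (F T : {set {set V}}) (f e : {set V}) (u v z x y : V) (p : seq V).

Lemma tadj_sym F : symmetric (tadj F).
Proof. by move=> x y; rewrite /tadj setUC. Qed.

Lemma connect_tadjC F x y : connect (tadj F) x y = connect (tadj F) y x.
Proof. exact: (sym_connect_sym (@tadj_sym F)). Qed.

Lemma eq_set2 a b x y : [set a; b] = [set x; y] -> (a = x /\ b = y) \/ (a = y /\ b = x).
Proof.
move=> E.
have ha : a \in [set x; y] by rewrite -E !inE eqxx.
have hb : b \in [set x; y] by rewrite -E !inE eqxx orbT.
have hx : x \in [set a; b] by rewrite E !inE eqxx.
have hy : y \in [set a; b] by rewrite E !inE eqxx orbT.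
move: ha hb hx hy; rewrite !inE.
by do 4! (case/orP=> /eqP ?); subst; auto.
Qed.

(* Every y != r has a neighbour z strictly closer to r; the edges [set y; z]
   are pairwise distinct, which gives |V| - 1 distinct edges. *)
Lemma connected_card_edges F r : (forall y, connect (tadj F) y r) -> (#|V| <= #|F| + 1)%N.
Proof.
move=> hc.
pose P y n := [exists t : n.-tuple V, path (tadj F) y t && (last y t == r)].
have hex y : exists n, P y n.
  have /connectP [p pp lp] := hc y.
  by exists (size p); apply/existsP; exists (in_tuple p); rewrite /= pp lp eqxx.
pose d y := ex_minn (hex y).
have step y : y != r -> exists z, tadj F y z && (d z < d y)%N.
  move=> nyr; rewrite /d; case: (ex_minnP (hex y)) => m /existsP [t /andP [pt /eqP lt]] _.
  case: t pt lt => [[|z t'] /= szt]; first by move=> _ ly; rewrite ly eqxx in nyr.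
  move=> /andP [yz pt'] lt; exists z; rewrite yz /=.
  case: (ex_minnP (hex z)) => m' _ /(_ (size t')) h.
  have : P z (size t') by apply/existsP; exists (in_tuple t'); rewrite /= pt' lt eqxx.
  by move/h; rewrite -(eqP szt) /=; lia.
pose nx y := odflt y [pick z | tadj F y z && (d z < d y)%N].
have hnx y : y != r -> tadj F y (nx y) && (d (nx y) < d y)%N.
  by move=> /step [z hz]; rewrite /nx; case: pickP => [z' -> //|/(_ z)]; rewrite hz.
pose g y := [set y; nx y].
have ginj : {in [set~ r] &, injective g}.
  move=> y z; rewrite !inE => yr zr /eq_set2 [[-> _] //|[e1 e2]].
  have := hnx _ yr; have := hnx _ zr; rewrite -e1 e2 => /andP[_ h1] /andP [_ h2].
  by move: h1; rewrite ltnNge (ltnW h2).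
have sub : g @: [set~ r] \subset F.
  apply/subsetP => e /imsetP [y]; rewrite !inE => yr ->.
  by have /andP [] := hnx _ yr.
have := subset_leq_card sub; rewrite card_in_imset // cardsC1.
by case: #|V| => // k; rewrite addn1 ltnS.
Qed.

Lemma spanning_bridge T f x y : spanning T -> f \in T -> f = [set x; y] ->
  ~~ connect (tadj (T :\ f)) x y.
Proof.
move=> /and3P [_ /eqP cT /forallP hc] fT ef; apply/negP => cxy.
have hall a b : connect (tadj (T :\ f)) a b.
  apply: connect_sub (forallP (hc a) b) => c d cd.
  case: (eqVneq [set c; d] f) => [E|ne].
    by rewrite ef in E; case: (eq_set2 E) => [[-> ->] //|[-> ->]]; rewrite connect_tadjC.
  by apply: connect1; rewrite /tadj in_setD1 ne.
have := connected_card_edges (fun a => hall a x).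
move: cT; rewrite (cardsD1 f T) fT /=.
set t := #|T :\ f|; set k := #|V|; lia.
Qed.

Definition plist u p : seq {set V} := [seq [set xy.1; xy.2] | xy <- zip (u :: p) p].

Lemma pedgesE u p : pedges u p = [set g in plist u p].
Proof. by []. Qed.

Lemma pedges_cons u z p : pedges u (z :: p) = [set u; z] |: pedges z p.
Proof. by apply/setP => g; rewrite !pedgesE !inE. Qed.

Lemma plist_subset u p f : f \in plist u p -> {subset f <= u :: p}.
Proof.
elim: p u => //= z p IH u; rewrite inE => /orP[/eqP-> x|/IH h x /h].
  by rewrite !inE => /orP[]->; rewrite ?orbT.
by move=> hx; rewrite inE hx orbT.
Qed.

Lemma pedges_subset u p f : f \in pedges u p -> {subset f <= u :: p}.
Proof. rewrite pedgesE inE; exact: plist_subset. Qed.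

Lemma path_plist_edge T u p f : path (tadj T) u p -> f \in plist u p -> f \in T.
Proof.
by elim: p u => //= z p IH u /andP [uz pp]; rewrite inE => /orP[/eqP->//|]; apply: IH.
Qed.

Lemma path_setD1 T f u p : path (tadj T) u p -> f \notin pedges u p ->
  path (tadj (T :\ f)) u p.
Proof.
elim: p u => //= z p IH u /andP [uz pp].
rewrite pedges_cons in_setU1 negb_or => /andP [nf nfp].
by rewrite IH // andbT /tadj in_setD1 -/(tadj T u z) uz andbT eq_sym.
Qed.

Lemma path_edge_split T f u p : uniq (u :: p) -> path (tadj T) u p -> f \in pedges u p ->
  exists x y, [/\ f = [set x; y], connect (tadj (T :\ f)) u x &
     connect (tadj (T :\ f)) y (last u p)].
Proof.
elim: p u => [|z p IH] u up; first by rewrite pedgesE inE.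
move=> /andP [uz pp]; have [nu up'] := andP up.
have uf g : g \in pedges z p -> u \notin g.
  by move=> gp; apply: contra nu => /(pedges_subset gp).
rewrite pedges_cons in_setU1; case: (eqVneq f [set u; z]) => [ef _|nf /= fp].
  exists u, z; split => //; apply/connectP; exists p => //; apply: path_setD1 => //.
  by apply/negP => /uf; rewrite ef !inE eqxx.
have [x [y [exy cx cy]]] := IH z up' pp fp; exists x, y; split => //.
apply: connect_trans cx; apply: connect1.
by rewrite /tadj in_setD1 -/(tadj T u z) uz andbT eq_sym nf.
Qed.

(* The T-path between two vertices is unique: an edge on another path would be a
   bridge avoided by this one. *)
Lemma cov_tpath T u v p : spanning T -> tpath T u v p -> cov T [set u; v] = pedges u p.
Proof.
move=> sT [pp lp up]; apply/setP => f; rewrite inE; apply/idP/idP.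
  case/andP => fT /asboolP [u' [v' [p' [e' [pp' lp' up'] fp']]]].
  apply/negPn/negP => nf.
  have cuv : connect (tadj (T :\ f)) u v.
    by apply/connectP; exists p; [apply: path_setD1 | rewrite lp].
  have [x [y [exy cx cy]]] := path_edge_split up' pp' fp'.
  rewrite lp' in cy; have := spanning_bridge sT fT exy; apply/negP/negPn.
  case: (eq_set2 e') => [[eu ev]|[eu ev]]; subst u' v'.
    have h1 : connect (tadj (T :\ f)) x u by rewrite connect_tadjC.
    have h2 : connect (tadj (T :\ f)) v y by rewrite connect_tadjC ev.
    exact: connect_trans (connect_trans h1 cuv) h2.
  have h1 : connect (tadj (T :\ f)) x v by rewrite connect_tadjC.
  have h2 : connect (tadj (T :\ f)) v u by rewrite connect_tadjC.
  have h3 : connect (tadj (T :\ f)) u y by rewrite connect_tadjC eu.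
  exact: connect_trans (connect_trans h1 h2) h3.
move=> fp; rewrite (path_plist_edge pp) //=; last by move: fp; rewrite pedgesE inE.
by apply/asboolP; exists u, v, p.
Qed.

Lemma plist_uniq u p : uniq (u :: p) -> uniq (plist u p).
Proof.
elim: p u => // z p IH u /= /andP [nu up]; rewrite IH // andbT.
by apply: contra nu => /plist_subset; apply; rewrite !inE eqxx.
Qed.

Lemma odd_deg_plist u p x : uniq (u :: p) ->
  odd (deg (plist u p) x) = (x == u) (+) (x == last u p).
Proof.
elim: p u => [|z p IH] u /=; first by rewrite addbb.
move=> /andP [nu up]; rewrite /deg /= oddD -/(deg _ x) IH // !inE.
case: (eqVneq x u) => [->|xu] /=; last by case: (x == z); case: (x == last z p).
by move: nu; rewrite inE; case: (u == z).
Qed.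

Lemma pair_tpath T e : spanning T -> e \in pairs V ->
  exists u v p, [/\ e = [set u; v], u != v & tpath T u v p].
Proof.
move=> sT; rewrite inE => /cards2P [u [v [nuv ->]]].
move: (sT) => /and3P [_ _ /forallP /(_ u) /forallP /(_ v) /connectP [p0 pp0 lv]].
subst v; move: nuv; case: (shortenP pp0) => p pp up _ nuv.
by exists u, (last u p), p; split.
Qed.

End TreePaths.

Section OddCover.
Variables (V : finType) (T : {set {set V}}).
Hypothesis sT : spanning T.

Definition odd_cover (S : {set {set V}}) : {set {set V}} :=
  [set f in T | odd #|[set e in S | f \in cov T e]|].

Lemma count_enum_set (P : pred {set V}) (A : {set {set V}}) :
  count P (enum A) = #|[set g in A | P g]|.
Proof.
rewrite -sum1_count big_enum_cond -sum1_card; apply: eq_bigl => g; by rewrite inE.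
Qed.

Lemma odd_count_mult (P : pred {set V}) (s : seq {set V}) :
  odd (count P s) = odd #|[set g | P g && odd (count_mem g s)]|.
Proof.
elim: s => [|a s IH] /=.
  rewrite (_ : [set g | P g && false] = set0) ?cards0 //.
  by apply/setP => g; rewrite !inE andbF.
set A := [set g | P g && odd (count_mem g s)].
have eqA g : g != a -> P g && odd ((a == g) + count_mem g s) = (g \in A).
  by rewrite inE eq_sym => /negbTE ->.
case Pa: (P a) => /=; last first.
  have -> : [set g | P g && odd ((a == g) + count_mem g s)] = A.
    by apply/setP => g; case: (eqVneq g a) => [->|/eqA <-]; rewrite !inE ?Pa.
  by rewrite IH.
case: (boolP (a \in A)) => aA.
  have -> : [set g | P g && odd ((a == g) + count_mem g s)] = A :\ a.
    apply/setP => g; rewrite !inE; case: (eqVneq g a) => [->|/eqA //].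
    by move: aA; rewrite inE Pa /= => ->.
  by rewrite IH (cardsD1 a A) aA /= negbK.
have -> : [set g | P g && odd ((a == g) + count_mem g s)] = a |: A.
  apply/setP => g; rewrite !inE; case: (eqVneq g a) => [->|/eqA //].
  by move: aA; rewrite inE Pa /= => /negbTE ->.
by rewrite IH cardsU1 aA.
Qed.

(* Concatenating the T-paths of the pairs of s. *)
Lemma tree_paths_multiset (s : seq {set V}) : all (mem (pairs V)) s ->
  exists NT : seq {set V}, [/\ all (mem T) NT,
    forall f, count_mem f NT = count (fun e => f \in cov T e) s &
    forall x, odd (deg NT x) = odd (deg s x)].
Proof.
elim: s => [|e s IH] /=; first by exists [::].
case/andP => eP aS; have [NT [hT hc hd]] := IH aS.
have [u [v [p [ee nuv tp]]]] := pair_tpath sT eP.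
case: (tp) => pp lp up.
exists (plist u p ++ NT); split.
- by rewrite all_cat hT andbT; apply/allP => g; apply: path_plist_edge pp.
- move=> f; rewrite count_cat count_uniq_mem ?plist_uniq // hc ee (cov_tpath sT tp).
  by rewrite pedgesE inE.
- move=> x; rewrite /deg count_cat oddD -/(deg _ x) odd_deg_plist // -/(deg NT x) hd.
  rewrite lp ee oddD -/(deg s x) oddb !inE; congr (_ (+) _).
  by case: (eqVneq x u) => [->|] //=; rewrite (negbTE nuv).
Qed.

Lemma odd_deg_odd_cover (S : {set {set V}}) x : S \subset pairs V ->
  odd (deg (enum (odd_cover S)) x) = odd (deg (enum S) x).
Proof.
move=> SP; have aS : all (mem (pairs V)) (enum S).
  by apply/allP => e; rewrite mem_enum => /(subsetP SP).
have [NT [hT hc hd]] := tree_paths_multiset aS.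
rewrite -hd /deg count_enum_set odd_count_mult.
suff -> : [set g in odd_cover S | x \in g] =
    [set g : {set V} | (x \in g) && odd (count_mem g NT)] by [].
apply/setP => g; rewrite !inE hc count_enum_set; case: (x \in g); rewrite ?andbT ?andbF //.
case: (boolP (odd _)) => og; rewrite ?andbF ?andbT //.
apply: (allP hT); rewrite -has_pred1 has_count; apply: odd_gt0.
by rewrite hc count_enum_set.
Qed.

End OddCover.

Section TJoinTour.
Variables (R : realFieldType) (V : finType) (w : V -> V -> R).
Hypothesis hw : metric w.
Variable T : {set {set V}}.
Hypothesis sT : spanning T.

Lemma path_last_closed (W : seq V) x p : (forall a b, a \in W -> tadj T a b -> b \in W) ->
  path (tadj T) x p -> x \in W -> last x p \in W.
Proof.
move=> hcl; elim: p x => //= y p IH x /andP [xy pp] xW; apply: IH => //; exact: hcl xy.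
Qed.

Lemma TSP_le_covering_tours (r : V) (L : seq (seq V)) :
  (forall f, f \in T -> exists2 U, U \in L & {subset f <= U}) ->
  TSP w <= \sum_(U <- L) tour_weight w U.
Proof.
move=> cL; have [W [nW hW sW cW]] := merge_tours hw L (isT : [:: r] != [::]).
have hcl a b : a \in W -> tadj T a b -> b \in W.
  move=> aW /cL [U UL fU].
  have aU : a \in U by apply: fU; rewrite !inE eqxx.
  have bU : b \in U by apply: fU; rewrite !inE eqxx orbT.
  by apply: (cW U UL _ b bU); apply/hasP; exists a.
have Wall y : y \in W.
  case/and3P: sT => _ _ /forallP /(_ r) /forallP /(_ y) /connectP [p pp ->].
  by apply: path_last_closed pp _ => //; apply/sW/mem_head.
case: W nW hW {sW cW hcl} Wall => // x l _ hW Wall.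
apply: le_trans (TSP_le_tour hw Wall) _; apply: le_trans hW _.
by rewrite /= (metric0 hw) addr0 add0r.
Qed.

(* The multigraph S + X_S + 2 (T \ X_S) is connected with all degrees even. *)
Lemma TSP_le_odd_cover (r : V) (S : {set {set V}}) : S \subset pairs V ->
  TSP w <= 2 * wset w T - wset w (odd_cover T S) + wset w S.
Proof.
move=> SP; set X := odd_cover T S.
have TP : T \subset pairs V by case/and3P: sT.
have XT : X \subset T by apply/subsetP => f; rewrite inE => /andP[].
have aM : all (mem (pairs V)) (enum X ++ enum S).
  rewrite all_cat; apply/andP; split; apply/allP => f; rewrite mem_enum => hf.
  - exact: subsetP TP f (subsetP XT f hf).
  - exact: subsetP SP f hf.
have eM x : ~~ odd (deg (enum X ++ enum S) x).
  by rewrite /deg count_cat oddD -!/(deg _ x) odd_deg_odd_cover // addbb.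
have [L [hL cL]] := even_pairs_tours hw aM eM.
have aTX : all (mem (pairs V)) (enum (T :\: X)).
  by apply/allP => f; rewrite mem_enum inE => /andP [_ /(subsetP TP)].
have [L2 [hL2 cL2]] := doubled_pairs_tours hw aTX.
have cLL2 f : f \in T -> exists2 U, U \in L ++ L2 & {subset f <= U}.
  move=> fT; case: (boolP (f \in X)) => fX.
    have /cL [U UL fU] : f \in enum X ++ enum S by rewrite mem_cat mem_enum fX.
    by exists U; rewrite // mem_cat UL.
  have /cL2 [U UL fU] : f \in enum (T :\: X) by rewrite mem_enum inE fX.
  by exists U; rewrite // mem_cat UL orbT.
apply: le_trans (TSP_le_covering_tours r cLL2) _.
rewrite big_cat hL hL2 big_cat !big_enum /=.
rewrite /wset [\sum_(i in T) _](big_setID X) /= (setIidPr XT); lra.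
Qed.

End TJoinTour.

Section Toggle.
Variable T : finType.
Implicit Types (S U : {set T}) (k : T).

Definition toggle k S := if k \in S then S :\ k else k |: S.

Lemma toggleK k : involutive (toggle k).
Proof.
move=> S; rewrite /toggle; case: (boolP (k \in S)) => kS.
  by rewrite !inE eqxx /= setD1K.
by rewrite !inE eqxx /= setU1K.
Qed.

Lemma mem_toggle k S : (k \in toggle k S) = (k \notin S).
Proof. by rewrite /toggle; case: (boolP (k \in S)) => kS; rewrite !inE eqxx. Qed.

Lemma toggle_subset k U S : k \in U -> (toggle k S \subset U) = (S \subset U).
Proof.
move=> kU; rewrite /toggle; case: (boolP (k \in S)) => kS.
  apply/idP/idP => h; last by apply: subset_trans h; apply: subsetDl.
  by rewrite -(setD1K kS) subUset sub1set kU h.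
by rewrite subUset sub1set kU.
Qed.

Lemma odd_card_toggle k S (P : pred T) : P k ->
  odd #|[set e in toggle k S | P e]| = ~~ odd #|[set e in S | P e]|.
Proof.
move=> Pk; rewrite /toggle; case: (boolP (k \in S)) => kS.
  have -> : [set e in S :\ k | P e] = [set e in S | P e] :\ k.
    by apply/setP => e; rewrite !inE andbA.
  by rewrite [in RHS](cardsD1 k) inE kS Pk /= negbK.
have -> : [set e in k |: S | P e] = k |: [set e in S | P e].
  by apply/setP => e; rewrite !inE; case: (eqVneq e k) => [->|]; rewrite ?Pk.
by rewrite cardsU1 inE (negbTE kS).
Qed.

(* Toggling k pairs off the subsets of U with and without property b. *)
Lemma sum_subsets_half (R : realFieldType) k U (b : {set T} -> bool) : k \in U ->
  (forall S, b (toggle k S) = ~~ b S) ->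
  \sum_(S : {set T} | S \subset U) (b S)%:R * 2 = \sum_(S : {set T} | S \subset U) (1 : R).
Proof.
move=> kU hb.
have E : \sum_(S : {set T} | S \subset U) (b S)%:R =
    \sum_(S : {set T} | S \subset U) (~~ b S)%:R :> R.
  rewrite (reindex_inj (can_inj (toggleK k))) /=.
  by apply: eq_big => S; rewrite ?toggle_subset // => _; rewrite hb.
rewrite -big_distrl /= mulrDr mulr1 {2}E -big_split /=.
by apply: eq_bigr => S _; case: (b S); rewrite ?addr0 ?add0r.
Qed.

Lemma sum_mem_mul (R : realFieldType) (A B : {set T}) (F : T -> R) : B \subset A ->
  \sum_(e in A) (e \in B)%:R * F e = \sum_(e in B) F e.
Proof.
move=> BA; rewrite (bigID (mem B)) /= [X in _ + X]big1 ?addr0; last first.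
  by move=> e /andP [_ /negbTE ->]; rewrite mul0r.
apply: eq_big => e; last by move=> /andP [_ ->]; rewrite mul1r.
by apply/andP/idP => [[]//|eB]; split => //; apply: (subsetP BA).
Qed.

Lemma exists_ge_average (R : realFieldType) (P : pred T) (F : T -> R) (c : R) i0 :
  P i0 -> \sum_(i | P i) F i = \sum_(i | P i) c -> exists2 i, P i & c <= F i.
Proof.
move=> Pi0 hsum; case: (pselect (exists2 i, P i & c <= F i)) => // hlt; exfalso.
have : \sum_(i | P i) F i < \sum_(i | P i) c.
  apply: ltr_sum; first by apply/hasP; exists i0; rewrite ?mem_index_enum.
  by move=> i Pi; rewrite ltNge; apply/negP => hi; apply: hlt; exists i.
by rewrite hsum ltxx.
Qed.

End Toggle.

Section RandomSubset.
Variables (R : realFieldType) (V : finType) (w : V -> V -> R) (T U : {set {set V}}).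

Let N : R := \sum_(S : {set {set V}} | S \subset U) 1.

Lemma covS_subset : covS T U \subset T.
Proof. by apply/bigcupsP => e _; apply/subsetP => f; rewrite inE => /andP[]. Qed.

Lemma sum_subsets_wset :
  \sum_(S : {set {set V}} | S \subset U) wset w S * 2 = N * wset w U.
Proof.
transitivity (\sum_(S : {set {set V}} | S \subset U) \sum_(e in U) (e \in S)%:R * 2 * wE w e).
  apply: eq_bigr => S SU; rewrite /wset big_distrl /= -(sum_mem_mul _ SU).
  by apply: eq_bigr => e _; rewrite mulrA mulrAC.
rewrite exchange_big /= /wset big_distrr /=; apply: eq_bigr => e eU.
rewrite -big_distrl /= (@sum_subsets_half _ R e U (fun S => e \in S)) // => S.
by rewrite mem_toggle.
Qed.

Lemma sum_subsets_mem_odd_cover f :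
  \sum_(S : {set {set V}} | S \subset U) (odd #|[set e in S | f \in cov T e]|)%:R * 2 =
    N * (f \in covS T U)%:R.
Proof.
case: (boolP (f \in covS T U)) => hf.
  have [e eU fe] := bigcupP hf.
  rewrite mulr1 (@sum_subsets_half _ R e _ (fun S => odd #|[set e in S | f \in cov T e]|)) //.
  by move=> S; apply: odd_card_toggle.
rewrite mulr0 big1 // => S SU.
suff -> : [set e in S | f \in cov T e] = set0 by rewrite cards0 mul0r.
apply/setP => e; rewrite !inE; apply/negP => /andP [eS fe].
by move/negP: hf; apply; apply/bigcupP; exists e; [exact: (subsetP SU) | rewrite inE].
Qed.

Lemma sum_subsets_odd_cover :
  \sum_(S : {set {set V}} | S \subset U) wset w (odd_cover T S) * 2 = N * wset w (covS T U).
Proof.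
have oT S : odd_cover T S \subset T by apply/subsetP => f; rewrite inE => /andP[].
transitivity (\sum_(S : {set {set V}} | S \subset U)
    \sum_(f in T) (odd #|[set e in S | f \in cov T e]|)%:R * 2 * wE w f).
  apply: eq_bigr => S _; rewrite /wset big_distrl /= -(sum_mem_mul _ (oT S)).
  by apply: eq_bigr => f fT; rewrite inE fT /= mulrA mulrAC.
rewrite exchange_big /= /wset -(sum_mem_mul _ covS_subset) big_distrr /=.
by apply: eq_bigr => f _; rewrite -big_distrl /= sum_subsets_mem_odd_cover mulrA.
Qed.

(* Averaging over all subsets S of U. *)
Lemma exists_subset_gain : exists2 S : {set {set V}}, S \subset U &
  wset w (covS T U) - wset w U <= 2 * (wset w (odd_cover T S) - wset w S).
Proof.
have hsum : \sum_(S : {set {set V}} | S \subset U) (wset w (odd_cover T S) - wset w S) * 2 =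
    \sum_(S : {set {set V}} | S \subset U) (wset w (covS T U) - wset w U).
  rewrite (eq_bigr (fun S => wset w (odd_cover T S) * 2 - wset w S * 2)); last first.
    by move=> S _; rewrite mulrBl.
  rewrite sumrB sum_subsets_odd_cover sum_subsets_wset -mulrBr /N big_distrl /=.
  by apply: eq_bigr => S _; rewrite mul1r.
have [S SU hS] := exists_ge_average (sub0set U) hsum.
by exists S; rewrite // mulrC.
Qed.

End RandomSubset.

Section Advantage.
Variables (R : realFieldType) (V : finType) (w : V -> V -> R).
Hypothesis hw : metric w.
Variable T : {set {set V}}.

Lemma adv_attained T' :
  exists E : {set {set V}}, (E \subset pairs V) && (adv w T T' <= adv_set w T E T').
Proof.
have F0 : adv_set w T set0 T' = 0.
  by rewrite /adv_set /covS big_set0 set0I /wset !big_set0 subr0.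
rewrite /adv; apply: (big_rec
  (fun x => exists E : {set {set V}}, (E \subset pairs V) && (x <= adv_set w T E T'))).
  by exists set0; rewrite sub0set F0 lexx.
move=> E x /andP [EP _] [E' /andP [E'P hx]].
by case: (leP x (adv_set w T E T')) => h; [exists E; rewrite EP lexx | exists E'; rewrite E'P].
Qed.

Lemma sum_wset_setI_disjoint (TT : {set {set {set V}}}) (A : {set {set V}}) :
  (forall X Y, X \in TT -> Y \in TT -> X != Y -> [disjoint X & Y]) ->
  \sum_(T' in TT) wset w (A :&: T') <= wset w A.
Proof.
move=> hd.
rewrite (eq_bigr (fun T' => \sum_(f in A) (f \in A :&: T')%:R * wE w f)); last first.
  by move=> T' _; rewrite sum_mem_mul // subsetIl.
rewrite exchange_big /=; apply: ler_sum => f fA.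
rewrite -big_distrl /= -[X in _ <= X]mul1r; apply: ler_wpM2r; first exact: (wE_ge0 hw).
case: (pickP (fun T' => (T' \in TT) && (f \in T'))) => [T0 /andP [T0T fT0]|none].
  rewrite (bigD1 T0) //= big1 ?addr0; first by rewrite inE fA fT0.
  move=> T' /andP [T'T ne]; rewrite inE (disjointFr (hd _ _ T0T T'T _) fT0) ?andbF //.
  by rewrite eq_sym.
rewrite big1 ?ler01 // => T' T'T; have := none T'; rewrite T'T /= inE => ->.
by rewrite andbF.
Qed.

Lemma wset_bigcup_le (TT : {set {set {set V}}}) (E : {set {set V}} -> {set {set V}}) :
  wset w (\bigcup_(T' in TT) E T') <= \sum_(T' in TT) wset w (E T').
Proof.
set U := \bigcup_(T' in TT) E T'.
rewrite (eq_bigr (fun T' => \sum_(f in U) (f \in E T')%:R * wE w f)); last first.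
  by move=> T' hT; rewrite sum_mem_mul //; apply: bigcup_sup.
rewrite exchange_big /=; apply: ler_sum => f fU.
rewrite -big_distrl /= -[X in X <= _]mul1r; apply: ler_wpM2r; first exact: (wE_ge0 hw).
have [T0 T0T fT0] := bigcupP fU.
by rewrite (bigD1 T0) //= fT0 lerDl; apply: sumr_ge0 => T' _; apply: ler0n.
Qed.

(* U is the union of optimal sets E_T'; edge-disjointness lets the covered parts add up. *)
Lemma sum_adv_le_gain (TT : {set {set {set V}}}) :
  (forall X Y, X \in TT -> Y \in TT -> X != Y -> [disjoint X & Y]) ->
  exists2 U : {set {set V}}, U \subset pairs V &
    \sum_(T' in TT) adv w T T' <= wset w (covS T U) - wset w U.
Proof.
move=> hd; have [E hE] := choice adv_attained.
set U := \bigcup_(T' in TT) E T'.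
exists U; first by apply/bigcupsP => T' _; case/andP: (hE T').
apply: le_trans (_ : _ <= \sum_(T' in TT) adv_set w T (E T') T') _.
  by apply: ler_sum => T' _; case/andP: (hE T').
have hcov : \sum_(T' in TT) wset w (covS T (E T') :&: T') <= wset w (covS T U).
  apply: le_trans (sum_wset_setI_disjoint _ hd); apply: ler_sum => T' hT'.
  apply/(wset_subset hw)/setSI/bigcupsP => e eE.
  by apply: (bigcup_sup e); apply: (subsetP (bigcup_sup T' hT')).
have := wset_bigcup_le TT E; rewrite /adv_set sumrB; lra.
Qed.

End Advantage.

Lemma wset_le_MST (R : realFieldType) (V : finType) (w : V -> V -> R) T :
  is_MST w T -> wset w T <= MST w.
Proof.
case=> sT hmin; apply: minseq_ge => [|x /mapP [F]]; last by rewrite mem_enum => /hmin h ->.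
by apply/eqP => /(f_equal (fun s => wset w T \in s)); rewrite map_f ?mem_enum.
Qed.

Theorem mainTheorem1 (R : realFieldType) (V : finType) (w : V -> V -> R)
    (T : {set {set V}}) (TT : {set {set {set V}}}) :
  (3 <= #|V|)%N ->
  metric w ->
  is_MST w T ->
  (forall T', T' \in TT -> subtree T T') ->
  (forall A B, A \in TT -> B \in TT -> A != B -> [disjoint A & B]) ->
  TSP w <= 2 * MST w - 2^-1 * \sum_(T' in TT) adv w T T'.
Proof.
move=> V3 hw hMST _ hdisj.
have /card_gt0P [r _] : (0 < #|V|)%N by apply: leq_trans V3.
have [U UP hadv] := sum_adv_le_gain hw T hdisj.
have [S SU hS] := exists_subset_gain w T U.
have := TSP_le_odd_cover hw hMST.1 r (subset_trans SU UP).
have := wset_le_MST hMST.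
lra.
Qed.
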